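(* Let $X$ be a Tychonoff space. Then $C_p(X,\mathbb R)$ is STAP if and only if $X$ is finite.
   Context: $C_p(X,\mathbb R)$ is the additive group of all continuous functions $X\to\mathbb R$ with the topology of pointwise convergence; its neutral element is the zero function. A sequence $(f_n)$ in an abelian topological group is hyper-converging if $m_nf_n\to 0$ for every integer sequence $(m_n)$. A group is STAP if no sequence of pairwise distinct elements is hyper-converging. *)

From Stdlib Require Import Reals List ZArith.
Open Scope R_scope.

Record TopSpace := {
  carrier :> Type;
  is_open : (carrier -> Prop) -> Prop;
  open_empty : is_open (fun _ => False);
  open_full : is_open (fun _ => True);
  open_inter : forall U V, is_open U -> is_open V -> is_open (fun x => U x /\ V x);
  open_union : forall (I : Type) (U : I -> carrier -> Prop),
      (forall i, is_open (U i)) -> is_open (fun x => exists i, U i x)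
}.

Definition R_open (U : R -> Prop) : Prop :=
  forall x, U x -> exists eps, 0 < eps /\ forall y, Rabs (y - x) < eps -> U y.

Definition continuous_to_R (X : TopSpace) (f : X -> R) : Prop :=
  forall V, R_open V -> is_open X (fun x => V (f x)).

Definition is_closed (X : TopSpace) (F : X -> Prop) : Prop :=
  is_open X (fun x => ~ F x).

Definition T1 (X : TopSpace) : Prop :=
  forall x : X, is_closed X (fun y => y = x).

Definition completely_regular (X : TopSpace) : Prop :=
  forall (F : X -> Prop) (x : X), is_closed X F -> ~ F x ->
    exists f : X -> R, continuous_to_R X f /\
      (forall y, 0 <= f y <= 1) /\ f x = 0 /\ (forall y, F y -> f y = 1).

Definition Tychonoff (X : TopSpace) : Prop := T1 X /\ completely_regular X.

Definition finite_space (X : TopSpace) : Prop :=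
  exists l : list X, forall x : X, In x l.

Definition Cp (X : TopSpace) : Type := {f : X -> R | continuous_to_R X f}.

(* Convergence to the zero function in the topology of pointwise convergence
   (the product topology on R^X restricted to C(X)) is pointwise convergence. *)
Definition cp_converges_to_zero (X : TopSpace) (g : nat -> X -> R) : Prop :=
  forall x : X, Un_cv (fun n => g n x) 0.

Definition hyper_converging (X : TopSpace) (f : nat -> Cp X) : Prop :=
  forall m : nat -> Z,
    cp_converges_to_zero X (fun n x => IZR (m n) * proj1_sig (f n) x).

Definition Cp_STAP (X : TopSpace) : Prop :=
  ~ exists f : nat -> Cp X,
      (forall i j : nat, i <> j -> f i <> f j) /\ hyper_converging X f.

From Stdlib Require Import Reals List ZArith.
From Stdlib Require Import Lra Lia Classical ClassicalEpsilon FunctionalExtensionality PropExtensionality ProofIrrelevance.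
Open Scope R_scope.

(* Finite X: given pairwise distinct f_n, choose integers m_n so large that
   m_n |f_n(x)| >= 1 at every point x of X where f_n(x) <> 0.  If (f_n) were
   hyper-converging, then m_n f_n(x) -> 0 forces f_n(x) = 0 for large n at each
   of the finitely many x, so two of the f_n are both the zero function.

   Infinite X: any sequence of nonzero continuous functions with pairwise
   disjoint supports is pairwise distinct and hyper-converging, since at each
   point at most one term is nonzero.  Such a sequence is built recursively by
   repeatedly splitting a continuous "weight" w whose positivity set is infinite
   into a nonzero continuous piece c supported in {w > 0} and a new weight w'
   of the same kind with {w' > 0} inside {w > 0} and disjoint from the support
   of c.  The splitting uses complete regularity to separate two points of
   {w > 0}, and, when one side of the separation is finite, the T1 axiom to
   see that one point is isolated. *)

Section Continuity.

Variable X : TopSpace.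

Lemma is_open_ext (U V : X -> Prop) :
  is_open X U -> (forall x, U x <-> V x) -> is_open X V.
Proof.
  intros HU E. replace V with U; auto.
  extensionality x. apply propositional_extensionality. auto.
Qed.

(* Pointwise epsilon-delta continuity; easier to manipulate than preimages. *)
Definition continuous_eps (f : X -> R) : Prop :=
  forall x eps, 0 < eps -> exists U, is_open X U /\ U x /\
    forall y, U y -> Rabs (f y - f x) < eps.

Lemma continuous_eps_of_continuous (f : X -> R) :
  continuous_to_R X f -> continuous_eps f.
Proof.
  intros Hf x eps He.
  exists (fun y => Rabs (f y - f x) < eps). split; [|split; auto].
  - apply (Hf (fun r => Rabs (r - f x) < eps)).
    intros r Hr. exists (eps - Rabs (r - f x)). split; [lra|].
    intros y Hy. pose proof (Rabs_triang (y - r) (r - f x)) as T.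
    replace (y - r + (r - f x)) with (y - f x) in T by ring. lra.
  - replace (f x - f x) with 0 by ring. rewrite Rabs_R0. lra.
Qed.

(* The converse: an open V is the union, over points with f x in V, of the
   neighbourhoods provided by continuity at x. *)
Lemma continuous_of_continuous_eps (f : X -> R) :
  continuous_eps f -> continuous_to_R X f.
Proof.
  intros Hf V HV.
  assert (Hnbhd : forall i : {x : X | V (f x)}, exists U : X -> Prop,
             is_open X U /\ U (proj1_sig i) /\ forall y, U y -> V (f y)).
  { intros [x Hx]. destruct (HV _ Hx) as [e [He HeV]].
    destruct (Hf x e He) as [U [HUo [HUx HUe]]].
    exists U. simpl. auto. }
  destruct (choice _ Hnbhd) as [U HU].
  apply is_open_ext with (fun x => exists i, U i x).
  - apply open_union. intros i. apply (HU i).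
  - intros x. split.
    + intros [i Hi]. apply (HU i). exact Hi.
    + intros Hx. exists (exist _ x Hx). apply (HU (exist _ x Hx)).
Qed.

Lemma continuous_eps_const (k : R) : continuous_eps (fun _ => k).
Proof.
  intros x eps He. exists (fun _ => True). split; [apply open_full|split; auto].
  intros. replace (k - k) with 0 by ring. rewrite Rabs_R0. lra.
Qed.

Lemma continuous_eps_combine (h : R -> R -> R) (f g : X -> R) :
  (forall a b c d, Rabs (h a b - h c d) <= Rabs (a - c) + Rabs (b - d)) ->
  continuous_eps f -> continuous_eps g -> continuous_eps (fun x => h (f x) (g x)).
Proof.
  intros Hh Hf Hg x eps He.
  destruct (Hf x (eps / 2)) as [U [HUo [HUx HUe]]]; [lra|].
  destruct (Hg x (eps / 2)) as [V [HVo [HVx HVe]]]; [lra|].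
  exists (fun y => U y /\ V y). split; [apply open_inter; auto|split; auto].
  intros y [Uy Vy]. specialize (Hh (f y) (g y) (f x) (g x)).
  specialize (HUe y Uy). specialize (HVe y Vy). lra.
Qed.

Lemma continuous_eps_min (f g : X -> R) :
  continuous_eps f -> continuous_eps g -> continuous_eps (fun x => Rmin (f x) (g x)).
Proof.
  apply continuous_eps_combine. intros a b c d. unfold Rmin.
  destruct (Rle_dec a b), (Rle_dec c d); unfold Rabs; repeat destruct Rcase_abs; lra.
Qed.

Lemma continuous_eps_max (f g : X -> R) :
  continuous_eps f -> continuous_eps g -> continuous_eps (fun x => Rmax (f x) (g x)).
Proof.
  apply continuous_eps_combine. intros a b c d. unfold Rmax.
  destruct (Rle_dec a b), (Rle_dec c d); unfold Rabs; repeat destruct Rcase_abs; lra.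
Qed.

Lemma continuous_eps_sub (f g : X -> R) :
  continuous_eps f -> continuous_eps g -> continuous_eps (fun x => f x - g x).
Proof.
  apply continuous_eps_combine. intros a b c d.
  unfold Rabs; repeat destruct Rcase_abs; lra.
Qed.

Lemma positivity_open (f : X -> R) :
  continuous_eps f -> is_open X (fun x => 0 < f x).
Proof.
  intros Hf. apply (continuous_of_continuous_eps f Hf (fun r => 0 < r)).
  intros r Hr. exists r. split; auto. intros y Hy.
  unfold Rabs in Hy. destruct Rcase_abs; lra.
Qed.

Definition indicator (A : X -> Prop) (u v : R) (x : X) : R :=
  if excluded_middle_informative (A x) then u else v.

Lemma continuous_eps_indicator (A : X -> Prop) (u v : R) :
  is_open X A -> is_open X (fun x => ~ A x) -> continuous_eps (indicator A u v).
Proof.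
  intros HA HnA x eps He.
  assert (Hsame : forall y, (A y <-> A x) -> Rabs (indicator A u v y - indicator A u v x) < eps).
  { intros y Hy. unfold indicator.
    destruct (excluded_middle_informative (A y)), (excluded_middle_informative (A x));
      try tauto; replace (_ - _) with 0 by ring; rewrite Rabs_R0; lra. }
  destruct (classic (A x)) as [Ax|nAx].
  - exists A. split; [|split]; auto. intros y Ay. apply Hsame. tauto.
  - exists (fun y => ~ A y). split; [|split]; auto. intros y nAy. apply Hsame. tauto.
Qed.

Definition tmin (u v : R) : R := Rmax 0 (Rmin u v).

Lemma tmin_nonneg (u v : R) : 0 <= tmin u v.
Proof. unfold tmin, Rmax. destruct Rle_dec; lra. Qed.

Lemma tmin_pos (u v : R) : 0 < tmin u v <-> 0 < u /\ 0 < v.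
Proof. unfold tmin, Rmax, Rmin. repeat destruct Rle_dec; split; intros; lra. Qed.

Lemma continuous_eps_tmin (f g : X -> R) :
  continuous_eps f -> continuous_eps g -> continuous_eps (fun x => tmin (f x) (g x)).
Proof.
  intros Hf Hg. apply (continuous_eps_max (fun _ => 0)).
  - apply continuous_eps_const.
  - apply continuous_eps_min; auto.
Qed.

End Continuity.

Section FiniteSets.

Variable X : TopSpace.

Definition finite_set (S : X -> Prop) : Prop :=
  exists l : list X, forall x, S x -> In x l.

Lemma infinite_two_points (S : X -> Prop) :
  ~ finite_set S -> exists a b, S a /\ S b /\ a <> b.
Proof.
  intros Hinf. apply NNPP. intros Hno. apply Hinf.
  destruct (classic (exists a, S a)) as [[a Ha]|Hempty].
  - exists (a :: nil). intros x Hx. left. apply NNPP. intros Hxa.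
    apply Hno. exists a, x. auto.
  - exists nil. intros x Hx. apply Hempty. eauto.
Qed.

Lemma infinite_remove_point (S : X -> Prop) (a : X) :
  ~ finite_set S -> ~ finite_set (fun x => S x /\ x <> a).
Proof.
  intros Hinf [l Hl]. apply Hinf. exists (a :: l). intros x Hx.
  destruct (classic (x = a)) as [->|Hxa]; [left; auto|right; auto].
Qed.

Lemma open_point_or_outside_list (hT : T1 X) (a : X) (l : list X) :
  is_open X (fun x => x = a \/ ~ In x l).
Proof.
  induction l as [|p l IH].
  - apply is_open_ext with (fun _ => True); [apply open_full|].
    intros x. simpl. tauto.
  - apply is_open_ext with (fun x => (x = a \/ p <> x) /\ (x = a \/ ~ In x l)).
    + apply open_inter; auto. destruct (classic (p = a)) as [->|Hpa].
      * apply is_open_ext with (fun _ => True); [apply open_full|].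
        intros x. split; auto. intros _. destruct (classic (x = a)); auto.
      * apply is_open_ext with (fun x => ~ x = p); [apply hT|].
        intros x. split; [intros Hx; right; auto|]. intros [->|Hx]; auto.
    + intros x. simpl. split.
      * intros [[?|?] [?|?]]; tauto.
      * intros [?|?]; split; tauto.
Qed.

Lemma isolated_of_finite_open (hT : T1 X) (U : X -> Prop) (a : X) :
  is_open X U -> finite_set U -> U a -> is_open X (fun x => x = a).
Proof.
  intros HU [l Hl] Ha.
  apply is_open_ext with (fun x => U x /\ (x = a \/ ~ In x l)).
  - apply open_inter; auto. apply open_point_or_outside_list; auto.
  - intros x. split.
    + intros [Ux [->|Hx]]; auto. exfalso. auto.
    + intros ->. auto.
Qed.

End FiniteSets.

Arguments finite_set {X} S.

Section Splitting.

Variable X : TopSpace.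

Definition good_weight (w : X -> R) : Prop :=
  continuous_eps X w /\ ~ finite_set (fun x => 0 < w x).

Record splits (w c w' : X -> R) : Prop := {
  piece_continuous : continuous_eps X c;
  piece_nonzero : exists y, c y <> 0;
  rest_good : good_weight w';
  piece_inside : forall x, c x <> 0 -> 0 < w x;
  rest_inside : forall x, 0 < w' x -> 0 < w x;
  piece_rest_disjoint : forall x, c x <> 0 -> ~ 0 < w' x
}.

Lemma split_by_separator (w g1 g2 : X -> R) (y : X) :
  continuous_eps X w -> continuous_eps X g1 -> continuous_eps X g2 ->
  (forall x, 0 < g1 x -> 0 < g2 x -> False) ->
  0 < w y -> 0 < g1 y -> ~ finite_set (fun x => 0 < w x /\ 0 < g2 x) ->
  splits w (fun x => tmin (w x) (g1 x)) (fun x => tmin (w x) (g2 x)).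
Proof.
  intros Hw Hg1 Hg2 Hdisj Hwy Hg1y Hinf.
  assert (Hpos1 : forall x, tmin (w x) (g1 x) <> 0 -> 0 < w x /\ 0 < g1 x).
  { intros x Hx. apply tmin_pos. pose proof (tmin_nonneg (w x) (g1 x)). lra. }
  split.
  - apply continuous_eps_tmin; auto.
  - exists y. pose proof (proj2 (tmin_pos (w y) (g1 y)) (conj Hwy Hg1y)). lra.
  - split; [apply continuous_eps_tmin; auto|].
    intros [l Hl]. apply Hinf. exists l. intros x Hx. apply Hl, tmin_pos. exact Hx.
  - intros x Hx. apply Hpos1. exact Hx.
  - intros x Hx. apply tmin_pos in Hx. tauto.
  - intros x Hx Hx'. apply Hpos1 in Hx. apply tmin_pos in Hx'. apply (Hdisj x); tauto.
Qed.

(* Separate two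
   points a <> b of {w > 0} by phi with phi a = 0, phi b = 1.  If {w > 0} meets
   {phi < 1/2} in an infinite set, use phi - 1/2 and 1/2 - phi; otherwise that
   finite open set contains a, so a is isolated and its indicator separates. *)
Lemma separator_exists (hX : Tychonoff X) (w : X -> R) :
  good_weight w -> exists g1 g2 y,
    continuous_eps X g1 /\ continuous_eps X g2 /\
    (forall x, 0 < g1 x -> 0 < g2 x -> False) /\ 0 < w y /\ 0 < g1 y /\
    ~ finite_set (fun x => 0 < w x /\ 0 < g2 x).
Proof.
  intros [Hw Hinf]. destruct hX as [HT1 HCR].
  destruct (infinite_two_points X _ Hinf) as [a [b [Ha [Hb Hab]]]].
  destruct (HCR (fun x => x = b) a (HT1 b)) as [phi [Hphi [_ [Hphia Hphib]]]];
    [auto|].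
  specialize (Hphib b eq_refl). apply continuous_eps_of_continuous in Hphi.
  destruct (classic (finite_set (fun x => 0 < w x /\ 0 < 1/2 - phi x)))
    as [Hfin|Hinf'].
  - assert (Hiso : is_open X (fun x => x = a)).
    { apply (isolated_of_finite_open X HT1 (fun x => 0 < tmin (w x) (1/2 - phi x))).
      - apply positivity_open, continuous_eps_tmin; auto.
        apply (continuous_eps_sub X (fun _ => 1/2)); auto. apply continuous_eps_const.
      - destruct Hfin as [l Hl]. exists l. intros x Hx. apply Hl, tmin_pos. exact Hx.
      - apply tmin_pos. lra. }
    assert (Hco : is_open X (fun x => ~ x = a)) by apply HT1.
    exists (indicator X (fun x => x = a) 1 0), (indicator X (fun x => x = a) 0 1), a.
    split; [apply continuous_eps_indicator; auto|].
    split; [apply continuous_eps_indicator; auto|].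
    split; [intros x; unfold indicator; destruct excluded_middle_informative; lra|].
    split; [auto|].
    split; [unfold indicator; destruct excluded_middle_informative; [lra|tauto]|].
    intros Hfin'. apply (infinite_remove_point X _ a Hinf).
    destruct Hfin' as [l Hl]. exists l. intros x [Hx Hxa]. apply Hl. split; auto.
    unfold indicator. destruct excluded_middle_informative; [contradiction|lra].
  - exists (fun x => phi x - 1/2), (fun x => 1/2 - phi x), b.
    split; [apply (continuous_eps_sub X phi (fun _ => 1/2)); auto; apply continuous_eps_const|].
    split; [apply (continuous_eps_sub X (fun _ => 1/2)); auto; apply continuous_eps_const|].
    repeat split; auto; intros; lra.
Qed.

Lemma good_weight_splits (hX : Tychonoff X) (w : X -> R) :
  good_weight w -> exists c w', splits w c w'.
Proof.
  intros Hgood.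
  destruct (separator_exists hX w Hgood) as [g1 [g2 [y [Hg1 [Hg2 [Hdisj [Hwy [Hg1y Hinf]]]]]]]].
  do 2 eexists. exact (split_by_separator w g1 g2 y (proj1 Hgood) Hg1 Hg2 Hdisj Hwy Hg1y Hinf).
Qed.

End Splitting.

Arguments piece_continuous {X w c w'}.
Arguments piece_nonzero {X w c w'}.
Arguments rest_good {X w c w'}.
Arguments piece_inside {X w c w'}.
Arguments rest_inside {X w c w'}.
Arguments piece_rest_disjoint {X w c w'}.

Section DisjointFamily.

Variable X : TopSpace.

(* A chosen splitting of each weight (meaningful for good weights). *)
Definition split_of (w : X -> R) : (X -> R) * (X -> R) :=
  epsilon (inhabits (w, w)) (fun p => splits X w (fst p) (snd p)).

Lemma split_of_spec (hX : Tychonoff X) (w : X -> R) :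
  good_weight X w -> splits X w (fst (split_of w)) (snd (split_of w)).
Proof.
  intros Hgood. unfold split_of.
  apply (epsilon_spec (inhabits (w, w)) (fun p => splits X w (fst p) (snd p))).
  destruct (good_weight_splits X hX w Hgood) as [c [w' Hs]]. exists (c, w'). exact Hs.
Qed.

Fixpoint weight (n : nat) : X -> R :=
  match n with
  | O => fun _ => 1
  | S k => snd (split_of (weight k))
  end.

Definition piece (n : nat) : X -> R := fst (split_of (weight n)).

Hypothesis hX : Tychonoff X.
Hypothesis hinf : ~ finite_space X.

Lemma weight_good (n : nat) : good_weight X (weight n).
Proof.
  induction n as [|n IH].
  - split; [apply continuous_eps_const|].
    intros [l Hl]. apply hinf. exists l. intros x. apply Hl. cbn. lra.
  - apply (rest_good (split_of_spec hX _ IH)).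
Qed.

Lemma piece_spec (n : nat) : splits X (weight n) (piece n) (weight (S n)).
Proof. apply (split_of_spec hX _ (weight_good n)). Qed.

Lemma weight_antitone (i j : nat) (x : X) :
  (i <= j)%nat -> 0 < weight j x -> 0 < weight i x.
Proof.
  induction 1 as [|j _ IH]; auto.
  intros Hx. apply IH, (rest_inside (piece_spec j)), Hx.
Qed.

Lemma pieces_disjoint (i j : nat) (x : X) :
  piece i x <> 0 -> piece j x <> 0 -> i = j.
Proof.
  assert (Hlt : forall i j, (i < j)%nat -> piece i x <> 0 -> piece j x <> 0 -> False).
  { intros i' j' Hij Hi Hj.
    assert (Hwj : 0 < weight j' x) by apply (piece_inside (piece_spec j') x Hj).
    apply (piece_rest_disjoint (piece_spec i') x Hi).
    apply (weight_antitone (S i') j'); auto. }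
  intros Hi Hj. destruct (Nat.lt_total i j) as [H|[H|H]]; auto; exfalso; eauto.
Qed.

End DisjointFamily.

Section InfiniteCase.

Variable X : TopSpace.

Lemma Cp_ext (f g : Cp X) : proj1_sig f = proj1_sig g -> f = g.
Proof.
  destruct f as [f pf], g as [g pg]. simpl. intros ->. f_equal. apply proof_irrelevance.
Qed.

Definition disjoint_supports (f : nat -> Cp X) : Prop :=
  forall i j x, proj1_sig (f i) x <> 0 -> proj1_sig (f j) x <> 0 -> i = j.

(* At each point at most one term is nonzero, so every multiple m_n f_n is
   eventually zero there. *)
Lemma disjoint_supports_hyper_converging (f : nat -> Cp X) :
  disjoint_supports f -> hyper_converging X f.
Proof.
  intros Hdisj m x eps He.
  assert (HN : exists N, forall n, (N <= n)%nat -> proj1_sig (f n) x = 0).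
  { destruct (classic (exists k, proj1_sig (f k) x <> 0)) as [[k Hk]|Hnone].
    - exists (S k). intros n Hn. apply NNPP. intros Hnz.
      pose proof (Hdisj k n x Hk Hnz). lia.
    - exists O. intros n _. apply NNPP. intros Hnz. apply Hnone. eauto. }
  destruct HN as [N HN]. exists N. intros n Hn.
  unfold R_dist. rewrite (HN n Hn). replace (IZR (m n) * 0 - 0) with 0 by ring.
  rewrite Rabs_R0. lra.
Qed.

Lemma disjoint_supports_distinct (f : nat -> Cp X) :
  disjoint_supports f -> (forall n, exists y, proj1_sig (f n) y <> 0) ->
  forall i j, i <> j -> f i <> f j.
Proof.
  intros Hdisj Hnz i j Hij E. destruct (Hnz i) as [y Hy].
  apply Hij, (Hdisj i j y Hy). rewrite <- E. exact Hy.
Qed.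

Lemma infinite_not_STAP (hX : Tychonoff X) :
  ~ finite_space X -> ~ Cp_STAP X.
Proof.
  intros Hinf HS.
  assert (Hcont : forall n, continuous_to_R X (piece X n)).
  { intros n. apply continuous_of_continuous_eps, (piece_continuous (piece_spec X hX Hinf n)). }
  set (f := fun n => exist _ (piece X n) (Hcont n) : Cp X).
  assert (Hdisj : disjoint_supports f).
  { intros i j x. apply (pieces_disjoint X hX Hinf). }
  apply HS. exists f. split.
  - apply disjoint_supports_distinct; auto. intros n. apply (piece_nonzero (piece_spec X hX Hinf n)).
  - apply disjoint_supports_hyper_converging; auto.
Qed.

End InfiniteCase.

Lemma large_multiplier (l : list R) :
  exists m : nat, forall r, In r l -> r <> 0 -> 1 <= INR m * Rabs r.
Proof.
  induction l as [|r0 l [m Hm]].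
  - exists O. intros r [].
  - destruct (INR_unbounded (/ Rabs r0)) as [k Hk].
    exists (Nat.max m k). intros r [<-|Hr] Hnz.
    + assert (Ha : 0 < Rabs r0) by (apply Rabs_pos_lt; auto).
      assert (Hle : INR k <= INR (Nat.max m k)) by (apply le_INR; lia).
      assert (Hk1 : 1 < INR k * Rabs r0).
      { replace 1 with (/ Rabs r0 * Rabs r0) by (field; lra).
        apply Rmult_lt_compat_r; auto. }
      nra.
    + pose proof (Hm r Hr Hnz).
      assert (Hle : INR m <= INR (Nat.max m k)) by (apply le_INR; lia).
      pose proof (Rabs_pos r). nra.
Qed.

Lemma multiplier_forces_zero (u : nat -> R) (m : nat -> nat) :
  (forall n, u n <> 0 -> 1 <= INR (m n) * Rabs (u n)) ->
  Un_cv (fun n => IZR (Z.of_nat (m n)) * u n) 0 ->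
  exists N, forall n, (N <= n)%nat -> u n = 0.
Proof.
  intros Hm Hcv. destruct (Hcv 1 Rlt_0_1) as [N HN]. exists N. intros n Hn.
  apply NNPP. intros Hnz. specialize (HN n Hn). specialize (Hm n Hnz).
  unfold R_dist in HN.
  rewrite Rminus_0_r, Rabs_mult, <- INR_IZR_INZ, (Rabs_pos_eq (INR (m n))) in HN
    by apply pos_INR.
  lra.
Qed.

Lemma eventually_on_list {A : Type} (P : A -> nat -> Prop) (l : list A) :
  (forall a, exists N, forall n, (N <= n)%nat -> P a n) ->
  exists N, forall a, In a l -> forall n, (N <= n)%nat -> P a n.
Proof.
  intros Hev. induction l as [|a l [N IH]].
  - exists O. intros a [].
  - destruct (Hev a) as [Na HNa]. exists (Nat.max Na N).
    intros b [<-|Hb] n Hn; [apply HNa|apply IH]; auto; lia.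
Qed.

Lemma finite_STAP (X : TopSpace) : finite_space X -> Cp_STAP X.
Proof.
  intros [l Hl] [f [Hdistinct Hhyper]].
  destruct (choice (fun n m => forall r, In r (map (proj1_sig (f n)) l) ->
                      r <> 0 -> 1 <= INR m * Rabs r)) as [m Hm].
  { intros n. apply large_multiplier. }
  assert (Hzero : forall x, exists N, forall n, (N <= n)%nat -> proj1_sig (f n) x = 0).
  { intros x. apply (multiplier_forces_zero (fun n => proj1_sig (f n) x) m).
    - intros n. apply Hm, in_map, Hl.
    - apply (Hhyper (fun n => Z.of_nat (m n))). }
  destruct (eventually_on_list _ l Hzero) as [N HN].
  apply (Hdistinct N (S N)); [lia|].
  apply Cp_ext. extensionality x.
  rewrite (HN x (Hl x) N), (HN x (Hl x) (S N)); auto.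
Qed.

Theorem theorem6p4 (X : TopSpace) (hX : Tychonoff X) :
  Cp_STAP X <-> finite_space X.
Proof.
  split.
  - intros HS. apply NNPP. intros Hinf. exact (infinite_not_STAP X hX Hinf HS).
  - apply finite_STAP.
Qed.
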